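(* Let $G$ be a finite non-cyclic abelian $p$-group. Then $\Delta_D(G)=\mathcal{P}_e(G)$ if and only if $G$ is elementary abelian.
   Context: The enhanced power graph $\mathcal{P}_e(G)$ has vertex set $G$ with distinct $x,y$ adjacent iff $\langle x,y\rangle$ is cyclic. The deep commuting graph $\Delta_D(G)$ has vertex set $G$, distinct vertices adjacent iff their preimages commute in a Schur cover $\tilde G$ of $G$ (a central extension $\{e\}\to M(G)\to\tilde G\to G\to\{e\}$ with kernel contained in $Z(\tilde G)\cap[\tilde G,\tilde G]$, of maximal order; $M(G)$ the Schur multiplier). An elementary abelian $p$-group is one in which every non-identity element has order $p$. *)

From mathcomp Require Import all_boot all_fingroup all_solvable.
Set Implicit Arguments. Unset Strict Implicit. Unset Printing Implicit Defensive.
Local Open Scope group_scope.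

Definition stem_extension (hT gT : finGroupType) (H : {group hT})
    (G : {group gT}) (f : {morphism H >-> gT}) : Prop :=
  f @* H = G /\ 'ker f \subset 'Z(H) :&: H^`(1).

(* A Schur cover: a stem extension whose kernel has maximal order among all
   stem extensions of G (over all finite groups). Its kernel is then M(G). *)
Definition schur_cover (hT gT : finGroupType) (H : {group hT})
    (G : {group gT}) (f : {morphism H >-> gT}) : Prop :=
  stem_extension G f /\
  forall (kT : finGroupType) (K : {group kT}) (g : {morphism K >-> gT}),
    stem_extension G g -> #|'ker g| <= #|'ker f|.

(* Adjacency in the deep commuting graph Delta_D(G) computed in the Schur
   cover f : H ->> G: distinct x, y are adjacent iff their preimages commute. *)
Definition deep_adj (hT gT : finGroupType) (H : {group hT})
    (f : {morphism H >-> gT}) (x y : gT) : Prop :=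
  x != y /\ forall a b, a \in H -> b \in H -> f a = x -> f b = y -> commute a b.

Definition epow_adj (gT : finGroupType) (x y : gT) : Prop :=
  x != y /\ cyclic <<[set x; y]>>.

From HB Require Import structures.
From mathcomp Require Import all_boot all_algebra all_fingroup all_solvable.
From mathcomp Require Import ring.
From Stdlib Require Import Classical_Prop.
Set Implicit Arguments. Unset Strict Implicit. Unset Printing Implicit Defensive.
Import GRing.Theory.
Local Open Scope group_scope.

(* If G is not elementary abelian, take g of order > p and y of order p outside
   <[g]>: then g ^+ p and y generate a non-cyclic group, yet their preimages
   commute in every stem extension of the abelian group G, because
   [c ^+ p, b] = [c, b ^+ p] and b ^+ p lies in the central kernel.
   If G = (Z/p)^n, the derived subgroup of a stem extension contains the kernel
   and is generated by the commutators of lifts of a basis, all of order p.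
   Were the lifts of two independent elements to commute, a Schur cover would
   have kernel of order at most p^(n choose 2 - 1), whereas the Heisenberg-type
   group below is a stem extension with kernel of order p^(n choose 2).
   Elements generating a cyclic group always have commuting preimages: these
   are powers of a single lift up to central factors. *)

Definition ltpair n := {t : 'I_n * 'I_n | t.1 < t.2}.

Lemma commgM_center (gT : finGroupType) (H : {group gT}) x y k l :
  x \in H -> y \in H -> k \in 'Z(H) -> l \in 'Z(H) -> [~ x * k, y * l] = [~ x, y].
Proof.
move=> xH yH /centerP[kH ck] /centerP[lH cl].
have conj_center z m : z \in H -> centralises m H -> z ^ m = z.
  by move=> zH cm; apply/conjg_fixP/commgP/commute_sym/cm.
rewrite commMgJ commgMJ !conj_center ?groupR ?groupM ?groupV //.
have /eqP-> : [~ x, l] == 1 by apply/commgP/commute_sym/cl.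
have /eqP-> : [~ k, y * l] == 1 by apply/commgP/ck/groupM.
by rewrite mul1g mulg1.
Qed.

Lemma card_abelian_gen (gT : finGroupType) (A : {set gT}) :
  abelian A -> #|<<A>>| <= exponent A ^ #|A|.
Proof.
move=> cAA; have cAgen : abelian <<A>> by rewrite abelian_gen.
rewrite -abelian_exponent_gen //; apply: leq_trans (max_card_abelian cAgen) _.
by rewrite leq_pexp2l ?exponent_gt0 // -grank_abelian // grank_min.
Qed.

Lemma gen_set2_cycle (gT : finGroupType) (u v : gT) :
  v \in <[u]> -> <<[set u; v]>> = <[u]>.
Proof.
move=> vu; apply/eqP; rewrite eqEsubset gen_subG cycle_subG mem_gen ?set21 // andbT.
by apply/subsetP=> z /set2P[]->; rewrite ?cycle_id.
Qed.

Lemma mem_bigdprod_cycle (gT : finGroupType) (G : {group gT}) n (e : 'I_n -> gT) :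
  \big[dprod/1]_(j < n) <[e j]> = G -> forall i, e i \in G.
Proof.
move=> defG i; rewrite -(bigdprodWY defG); apply/mem_gen/bigcupP.
by exists i => //; apply: cycle_id.
Qed.

Lemma ex_maxn_bounded (P : nat -> Prop) b :
  (exists m, P m) -> (forall m, P m -> m <= b) ->
  exists2 m, P m & forall k, P k -> k <= m.
Proof.
elim: b => [|b IHb] [m Pm] leb.
  by exists m => // k /leb; rewrite leqn0 => /eqP->.
have [Pb | nPb] := classic (P b.+1); first by exists b.+1.
apply: IHb; first by exists m.
move=> k Pk; have := leb k Pk; rewrite leq_eqVlt => /orP[/eqP Ek | //].
by rewrite Ek in Pk.
Qed.

Section Heisenberg.
Variables (R : finComNzRingType) (n : nat).
Implicit Types (v w : {ffun 'I_n -> R}) (c d : {ffun ltpair n -> R}).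
Local Open Scope ring_scope.

Definition heis := ({ffun 'I_n -> R} * {ffun ltpair n -> R})%type.
HB.instance Definition _ := Finite.on heis.

Definition heis_form v w : {ffun ltpair n -> R} :=
  [ffun t => v (val t).1 * w (val t).2].

Definition heis_mul (a b : heis) : heis :=
  (a.1 + b.1, a.2 + b.2 + heis_form a.1 b.1).
Definition heis_one : heis := (0, 0).
Definition heis_inv (a : heis) : heis := (- a.1, - a.2 + heis_form a.1 a.1).

Lemma heis_mulA : associative heis_mul.
Proof.
move=> a b c; congr pair; first exact: addrA.
by apply/ffunP=> t; rewrite !ffunE; ring.
Qed.

Lemma heis_mul1 : left_id heis_one heis_mul.
Proof.
move=> [v c]; rewrite /heis_mul /= add0r; congr pair.
by apply/ffunP=> t; rewrite !ffunE; ring.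
Qed.

Lemma heis_mulV : left_inverse heis_one heis_inv heis_mul.
Proof.
move=> [v c]; rewrite /heis_mul /= addNr; congr pair.
by apply/ffunP=> t; rewrite !ffunE; ring.
Qed.

HB.instance Definition _ := Finite_isGroup.Build heis heis_mulA heis_mul1 heis_mulV.

Lemma heis_form0l w : heis_form 0 w = 0.
Proof. by apply/ffunP=> t; rewrite !ffunE mul0r. Qed.

Lemma heis_form0r v : heis_form v 0 = 0.
Proof. by apply/ffunP=> t; rewrite !ffunE mulr0. Qed.

Definition heis_vert : {set heis} := [set ((0, c) : heis) | c : {ffun ltpair n -> R}].

Lemma card_heis_vert : #|heis_vert| = (#|R| ^ #|{: ltpair n}|)%N.
Proof. by rewrite card_imset ?card_ffun // => c d []. Qed.

Lemma heis_vert_center : heis_vert \subset 'Z([set: heis]).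
Proof.
apply/subsetP=> _ /imsetP[c _ ->]; apply/centerP; split=> [|[w d] _]; rewrite ?inE //.
by rewrite /commute /mulg /= /heis_mul /= heis_form0l heis_form0r add0r !addr0 addrC.
Qed.

Lemma heis_vertM : {morph (fun c => ((0, c) : heis)) : c d / c + d >-> (c * d)%g}.
Proof. by move=> c d; rewrite /mulg /= /heis_mul /= addr0 heis_form0l addr0. Qed.

Lemma heis_commg v w :
  [~ (v, 0) : heis, (w, 0)]%g = (0, heis_form v w - heis_form w v).
Proof.
rewrite /commg /conjg /mulg /invg /= /heis_mul /heis_inv /=; congr pair.
  by rewrite addrCA addKr addNr.
by apply/ffunP=> t; rewrite !ffunE; ring.
Qed.

Definition heis_unit i a : {ffun 'I_n -> R} := [ffun k => (k == i)%:R * a].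

Lemma heis_vert_der : heis_vert \subset ([set: heis]^`(1))%g.
Proof.
apply/subsetP=> _ /imsetP[c _ ->].
pose delta t : {ffun ltpair n -> R} := [ffun u => (u == t)%:R * c t].
have -> : c = \sum_t delta t.
  apply/ffunP=> u; rewrite sum_ffunE (bigD1 u) //= big1 => [|t tu].
    by rewrite ffunE eqxx mul1r addr0.
  by rewrite ffunE eq_sym (negbTE tu) mul0r.
rewrite (@big_morph _ _ (fun d => ((0, d) : heis)) 1%g mulg 0 +%R heis_vertM) //.
apply: group_prod => t _.
have -> : ((0, delta t) : heis) =
    [~ (heis_unit (val t).1 (c t), 0) : heis, (heis_unit (val t).2 1, 0)]%g.
  rewrite heis_commg; congr pair; apply/ffunP=> u; rewrite !ffunE.
  have -> : ((val u).1 == (val t).2)%:R * 1 * (((val u).2 == (val t).1)%:R * c t) = 0.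
    case: eqP => [u1|]; case: eqP => [u2|]; rewrite ?mul0r ?mulr0 //.
    by move: (valP u); rewrite u1 u2 => /(ltn_trans (valP t)); rewrite ltnn.
  rewrite subr0 mulr1 mulrAC -natrM mulnb.
  by case: t u => [[i j] ij] [[k l] kl]; rewrite -val_eqE /= xpair_eqE.
by rewrite /= derg1; apply: mem_commg; rewrite inE.
Qed.

End Heisenberg.

Section HeisenbergProjection.
Variables (p : nat) (gT : finGroupType) (G : {group gT}) (n : nat) (e : 'I_n -> gT).
Hypotheses (p_gt1 : 1 < p) (cGG : abelian G)
  (defG : \big[dprod/1]_(i < n) <[e i]> = G) (oe : forall i, #[e i] = p).

Definition heis_proj (a : heis 'Z_p n) : gT := \prod_(i < n) e i ^+ a.1 i.

Lemma heis_proj_morphM : {in [set: heis 'Z_p n] &, {morph heis_proj : a b / a * b}}.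
Proof.
move=> a b _ _; rewrite /heis_proj -prodgM_commute => [|i j _ _]; last first.
  by apply/commuteX2/(centsP cGG); apply: mem_bigdprod_cycle defG _.
apply: eq_bigr => i _; rewrite ffunE -expgD -(expg_mod_order _ (_ + _)) oe /=.
by congr (_ ^+ (_ %% _)); apply: Zp_cast.
Qed.

Canonical heis_projm := Morphism heis_proj_morphM.

Lemma heis_proj_im : heis_projm @* [set: heis 'Z_p n] = G.
Proof.
apply/eqP; rewrite eqEsubset; apply/andP; split.
  apply/subsetP=> _ /morphimP[a _ _ ->]; apply: group_prod => i _.
  exact/groupX/(mem_bigdprod_cycle defG _).
rewrite -{1}(bigdprodWY defG) gen_subG; apply/bigcupsP=> i _; rewrite cycle_subG.
have -> : e i = heis_projm (heis_unit i 1%R, 0%R).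
  rewrite /= /heis_proj (eq_bigr (fun j => if j == i then e i else 1)) => [|j _].
    by rewrite -big_mkcond big_pred1_eq.
  by rewrite ffunE mulr1; case: eqP => [-> | _] //=; rewrite Zp_cast // modn_small // expg1.
by rewrite mem_morphim ?inE.
Qed.

Lemma card_heis_proj_ker : #|'ker heis_projm| = (p ^ #|{: ltpair n}|)%N.
Proof.
have cardG : #|G| = (p ^ n)%N.
  rewrite -(bigdprod_card defG) (eq_bigr (fun _ => p)) => [|i _]; last exact: oe.
  by rewrite prod_nat_const card_ord.
have := Lagrange (subsetT ('ker heis_projm)).
have := card_morphim heis_projm [set: heis 'Z_p n].
rewrite setIid heis_proj_im cardG => <-.
rewrite cardsT card_prod !card_ffun !card_ord Zp_cast // mulnC => /eqP.
by rewrite eqn_pmul2l ?expn_gt0 ?(ltnW p_gt1) // => /eqP.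
Qed.

Lemma heis_proj_ker : 'ker heis_projm = heis_vert 'Z_p n.
Proof.
apply/esym/eqP; rewrite eqEcard card_heis_proj_ker card_heis_vert card_ord Zp_cast //.
rewrite leqnn andbT; apply/subsetP=> _ /imsetP[c _ ->]; apply/kerP; rewrite ?inE //.
by rewrite /= /heis_proj big1 // => i _; rewrite ffunE.
Qed.

Lemma heis_proj_stem : stem_extension G heis_projm.
Proof.
split; first exact: heis_proj_im.
by rewrite heis_proj_ker subsetI heis_vert_center heis_vert_der.
Qed.

End HeisenbergProjection.

Section StemExtension.
Variables (hT gT : finGroupType) (H : {group hT}) (G : {group gT}).
Variable f : {morphism H >-> gT}.
Hypothesis stemf : stem_extension G f.

Lemma stem_im : f @* H = G. Proof. by case: stemf. Qed.

Lemma stem_ker_center : 'ker f \subset 'Z(H).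
Proof. by case: stemf => _; rewrite subsetI => /andP[]. Qed.

Lemma stem_ker_der : 'ker f \subset H^`(1).
Proof. by case: stemf => _; rewrite subsetI => /andP[]. Qed.

Lemma stem_memG a : a \in H -> f a \in G.
Proof. by move=> aH; rewrite -stem_im mem_morphim. Qed.

Lemma stem_fibre a c :
  a \in H -> c \in H -> f a = f c -> exists2 k, k \in 'Z(H) & a = c * k.
Proof.
move=> aH cH fac; exists (c^-1 * a); last by rewrite mulKVg.
apply: (subsetP stem_ker_center); apply/kerP; first by rewrite groupM ?groupV.
by rewrite morphM ?groupV // morphV // fac mulVg.
Qed.

Lemma stem_commg_fibre a b c d : a \in H -> b \in H -> c \in H -> d \in H ->
  f a = f c -> f b = f d -> [~ a, b] = [~ c, d].
Proof.
move=> aH bH cH dH fac fbd.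
have [k kZ ->] := stem_fibre aH cH fac; have [l lZ ->] := stem_fibre bH dH fbd.
exact: (commgM_center cH dH kZ lZ).
Qed.

Definition stem_lift (u : gT) : hT := odflt 1 [pick a in H | f a == u].

Lemma stem_liftP u : u \in G -> stem_lift u \in H /\ f (stem_lift u) = u.
Proof.
rewrite -stem_im => /morphimP[a _ aH ->].
rewrite /stem_lift; case: pickP => [b /andP[bH /eqP] | /(_ a)] //=.
by rewrite aH eqxx.
Qed.

Hypothesis cGG : abelian G.

Lemma stem_der_center : H^`(1) \subset 'Z(H).
Proof.
apply: subset_trans stem_ker_center; rewrite -sub_morphim_pre ?der_sub //.
by rewrite morphim_der // stem_im (derG1P cGG).
Qed.

Lemma stem_commg_center a b : a \in H -> b \in H -> [~ a, b] \in 'Z(H).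
Proof. by move=> aH bH; apply: (subsetP stem_der_center); rewrite mem_commg. Qed.

Lemma stem_commgX a b m : a \in H -> b \in H -> [~ a, b ^+ m] = [~ a, b] ^+ m.
Proof.
move=> aH bH; apply: commgX; have /centerP[_ cZ] := stem_commg_center aH bH.
exact/commute_sym/cZ.
Qed.

Lemma stem_commXg a b m : a \in H -> b \in H -> [~ a ^+ m, b] = [~ a, b] ^+ m.
Proof.
move=> aH bH; apply: commXg; have /centerP[_ cZ] := stem_commg_center aH bH.
exact/commute_sym/cZ.
Qed.

Lemma stem_commg_expn a b m :
  a \in H -> b \in H -> f b ^+ m = 1 -> [~ a, b] ^+ m = 1.
Proof.
move=> aH bH fbm; rewrite -stem_commgX //; apply/eqP/commgP/commute_sym.
have /centerP[_ cK] : b ^+ m \in 'Z(H).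
  by apply: (subsetP stem_ker_center); apply/kerP; rewrite ?groupX ?morphX.
exact: cK.
Qed.

Lemma stem_commute_expn a b c m : a \in H -> b \in H -> c \in H ->
  f a = f c ^+ m -> f b ^+ m = 1 -> commute a b.
Proof.
move=> aH bH cH fac fbm; apply/commgP/eqP.
rewrite (stem_commg_fibre aH bH (groupX m cH) bH) ?morphX //.
by rewrite stem_commXg // stem_commg_expn.
Qed.

Lemma card_stem_ker : #|'ker f| <= #|G| ^ (#|G| * #|G|).
Proof.
set C := commg_set H H.
have cCC : abelian C.
  apply: abelianS (center_abelian H); apply/subsetP=> _ /imset2P[a b aH bH ->].
  exact: stem_commg_center.
have expC : exponent C %| #|G|.
  apply/exponentP=> _ /imset2P[a b aH bH ->].
  by apply: stem_commg_expn; rewrite ?expg_cardG ?stem_memG.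
have cardC : #|C| <= #|G| * #|G|.
  rewrite -cardsX; apply: leq_trans (leq_imset_card
    (fun u => [~ stem_lift u.1, stem_lift u.2]) (setX G G)).
  apply/subset_leq_card/subsetP=> _ /imset2P[a b aH bH ->].
  apply/imsetP; exists (f a, f b); first by rewrite inE /= !stem_memG.
  have [lH fl] := stem_liftP (stem_memG aH); have [lH' fl'] := stem_liftP (stem_memG bH).
  exact: stem_commg_fibre aH bH lH lH' (esym fl) (esym fl').
apply: leq_trans (subset_leq_card stem_ker_der) _; rewrite derg1.
apply: leq_trans (card_abelian_gen cCC) _.
apply: leq_trans (leq_pexp2l (dvdn_gt0 (cardG_gt0 G) expC) cardC) _.
by rewrite leq_exp2r ?muln_gt0 ?cardG_gt0 // dvdn_leq.
Qed.

End StemExtension.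

Lemma schur_cover_exists (gT : finGroupType) (G : {group gT}) : abelian G ->
  exists (hT : finGroupType) (H : {group hT}) (f : {morphism H >-> gT}),
    schur_cover G f.
Proof.
move=> cGG.
pose P m := exists (hT : finGroupType) (H : {group hT}) (f : {morphism H >-> gT}),
  stem_extension G f /\ #|'ker f| = m.
have [m [hT [H [f [stemf <-]]]] maxf] : exists2 m, P m & forall k, P k -> k <= m.
  apply: (@ex_maxn_bounded P (#|G| ^ (#|G| * #|G|))).
    exists 1%N, gT, G, [morphism of idm G]; rewrite ker_idm cards1.
    by split=> //; split; rewrite ?morphim_idm ?ker_idm ?sub1G.
  by move=> m [hT [H [f [stemf <-]]]]; apply: card_stem_ker.
exists hT, H, f; split=> // kT K g stemg; apply: maxf.
by exists kT, K, g.
Qed.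

Lemma stem_cyclic_commute (hT gT : finGroupType) (H : {group hT}) (G : {group gT})
    (f : {morphism H >-> gT}) a b :
  stem_extension G f -> a \in H -> b \in H -> cyclic <<[set f a; f b]>> ->
  commute a b.
Proof.
move=> stemf aH bH /cyclicP[g defX].
have mem_gX z : z \in [set f a; f b] -> z \in <[g]>.
  by rewrite -defX; apply: mem_gen.
have [i fai] := cycleP _ _ (mem_gX _ (set21 _ _)).
have [j fbj] := cycleP _ _ (mem_gX _ (set22 _ _)).
have /morphimP[c _ cH fc] : g \in f @* H.
  rewrite (stem_im stemf) -(cycle_subG g G) -defX gen_subG.
  by apply/subsetP=> z /set2P[]->; apply: (stem_memG stemf).
apply/commgP/eqP; rewrite (stem_commg_fibre stemf aH bH (groupX i cH) (groupX j cH)).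
- exact/eqP/commgP/commuteX2.
- by rewrite morphX // -fc.
- by rewrite morphX // -fc.
Qed.

Lemma epow_deep_adj (hT gT : finGroupType) (H : {group hT}) (G : {group gT})
    (f : {morphism H >-> gT}) x y :
  stem_extension G f -> epow_adj x y -> deep_adj f x y.
Proof.
move=> stemf [xy cycX]; split=> // a b aH bH fa fb.
by apply: (stem_cyclic_commute stemf aH bH); rewrite fa fb.
Qed.

Lemma not_abelem_noncyclic_pair (gT : finGroupType) (G : {group gT}) p :
  prime p -> p.-group G -> abelian G -> ~~ cyclic G -> ~~ p.-abelem G ->
  exists g y, [/\ g \in G, y \in G, y ^+ p = 1 & ~~ cyclic <<[set g ^+ p; y]>>].
Proof.
move=> p_pr pG cGG ncG; rewrite abelemE // cGG /= => not_exp_p.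
have /exists_inP[g gG gp1] : [exists g in G, g ^+ p != 1].
  apply: contraR not_exp_p => /exists_inPn gp1; apply/exponentP=> u uG.
  by apply/eqP; move: (gp1 u uG); rewrite negbK.
have [E /pnElemP[sEG abelE dimE]] : exists E, E \in 'E_p^2(G).
  by apply/p_rank_geP; rewrite -(rank_pgroup pG) ltnNge -abelian_rank1_cyclic.
have /subsetPn[y yE ygn] : ~~ (E \subset <[g]>).
  apply/negP=> /cyclicS/(_ (cycle_cyclic g)).
  rewrite abelian_rank1_cyclic ?(abelem_abelian abelE) //.
  by rewrite (rank_pgroup (abelem_pgroup abelE)) p_rank_abelem // dimE.
have yp1 : y ^+ p = 1 by have /and3P[_ _ /exponentP->] := abelE.
have oy : #[y] = p.
  apply: abelem_order_p abelE yE _; apply: contraNneq ygn => ->; exact: group1.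
exists g, y; split=> //; first exact: (subsetP sEG).
apply/negP=> cycX.
have [z gpz oz] : {z | z \in <[g ^+ p]> & #[z] = p}.
  apply: Cauchy => //; have pX : p.-group <[g ^+ p]>.
    by apply: pgroupS pG; rewrite cycle_subG groupX.
  by have [] := pgroup_pdiv pX; rewrite ?cycle_eq1.
have sX u : u \in [set g ^+ p; y] -> <[u]> \subset <<[set g ^+ p; y]>>.
  by move=> uX; rewrite cycle_subG mem_gen.
have sZX : <[z]> \subset <<[set g ^+ p; y]>>.
  apply: subset_trans (sX _ (set21 _ _)); by rewrite cycle_subG.
have := eq_subG_cyclic cycX (sX _ (set22 _ _)) sZX; rewrite -!orderE oy oz eqxx.
move/eqP=> eYZ; move: (cycle_id y); rewrite eYZ => yZ.
have sZg : <[z]> \subset <[g]>.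
  by rewrite cycle_subG (subsetP _ z gpz) // cycle_subG mem_cycle.
by rewrite (subsetP sZg y yZ) in ygn.
Qed.

Lemma stem_deep_not_epow (hT gT : finGroupType) (H : {group hT}) (G : {group gT})
    (f : {morphism H >-> gT}) p :
  prime p -> p.-group G -> abelian G -> ~~ cyclic G -> ~~ p.-abelem G ->
  stem_extension G f ->
  exists x y, [/\ x \in G, y \in G, deep_adj f x y & ~ epow_adj x y].
Proof.
move=> p_pr pG cGG ncG not_abelem stemf.
have [g [y [gG yG yp1 ncX]]] := not_abelem_noncyclic_pair p_pr pG cGG ncG not_abelem.
exists (g ^+ p), y; split; rewrite ?groupX //; last by case=> _ cycX; rewrite cycX in ncX.
split=> [|a b aH bH fa fb].
  by apply: contraNneq ncX => ->; rewrite setUid cycle_cyclic.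
have /morphimP[c _ cH fc] : g \in f @* H by rewrite (stem_im stemf).
by apply: (stem_commute_expn stemf cGG aH bH cH); rewrite ?fa ?fb ?fc.
Qed.

Lemma abelem_basis_through (gT : finGroupType) (G : {group gT}) p x y :
  prime p -> p.-abelem G -> x \in G -> y \in G -> ~~ cyclic <<[set x; y]>> ->
  exists n (e : 'I_n -> gT) (t : ltpair n),
    [/\ e (val t).1 = x, e (val t).2 = y,
        \big[dprod/1]_(i < n) <[e i]> = G & forall i, #[e i] = p].
Proof.
move=> p_pr abelG xG yG ncX.
have ynx : y \notin <[x]>.
  by apply: contra ncX => yx; rewrite gen_set2_cycle ?cycle_cyclic.
have nt u : u \in [set x; y] -> u != 1.
  move=> /set2P[]-> ; apply: contraNneq ncX => ->.
    by rewrite setUC gen_set2_cycle ?group1 ?cycle_cyclic.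
  by rewrite gen_set2_cycle ?group1 ?cycle_cyclic.
have ox : #[x] = p by apply: abelem_order_p abelG xG (nt _ (set21 _ _)).
have oy : #[y] = p by apply: abelem_order_p abelG yG (nt _ (set22 _ _)).
have cGG := abelem_abelian abelG.
have dXY : <[x]> \x <[y]> = <[x]> <*> <[y]>.
  rewrite dprodE ?cent_joinEr ?(centSS _ _ cGG) ?cycle_subG //.
  by rewrite setIC prime_TIg ?cycle_subG // -orderE oy.
have sXYG : <[x]> <*> <[y]> \subset G by rewrite join_subG !cycle_subG xG yG.
have [C dXYC] := abelem_split_dprod abelG sXYG.
have abelC : p.-abelem C by apply: abelemS abelG; rewrite -(dprodW dXYC) mulG_subr.
have [b defC ob] := abelian_structure (abelem_abelian abelC).
exists (size b).+2, (fun i => nth 1 (x :: y :: b) i), (exist _ (ord0, lift ord0 ord0) isT).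
split=> // [|i].
  have : \big[dprod/1]_(z <- x :: y :: b) <[z]> = G.
    by rewrite !big_cons defC dprodA dXY.
  by rewrite (big_nth 1) big_mkord.
have /predU1P[-> // | /predU1P[-> // | zb]] := mem_nth 1 (ltn_ord i : i < size (x :: y :: b)).
apply: abelem_order_p abelC _ _.
  rewrite -(bigdprodWY defC) bigcup_seq; apply/mem_gen/bigcupP.
  by exists (nth 1 (x :: y :: b) i) => //; apply: cycle_id.
rewrite -order_gt1; have /allP := abelian_type_gt1 C.
by rewrite -ob; apply; rewrite map_f.
Qed.

Section StemBasis.
Variables (hT gT : finGroupType) (H : {group hT}) (G : {group gT}).
Variables (f : {morphism H >-> gT}) (p n : nat) (e : 'I_n -> gT) (l : 'I_n -> hT).
Hypotheses (stemf : stem_extension G f) (cGG : abelian G) (p_gt0 : 0 < p).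
Hypotheses (defG : \big[dprod/1]_(i < n) <[e i]> = G) (ep : forall i, e i ^+ p = 1).
Hypotheses (lH : forall i, l i \in H) (fl : forall i, f (l i) = e i).

Let T := [set t : ltpair n | [~ l (val t).1, l (val t).2] != 1].
Let L := <<[set [~ l (val t).1, l (val t).2] | t in T]>>.

Lemma mem_commg_lifts i j : [~ l i, l j] \in L.
Proof.
have mem_L (t : ltpair n) : [~ l (val t).1, l (val t).2] \in L.
  have [tT | ] := boolP (t \in T); first exact/mem_gen/imset_f.
  by rewrite inE negbK => /eqP->; apply: group1.
case: (ltngtP i j) => [ij | ji | /val_inj->]; first exact: (mem_L (exist _ (i, j) ij)).
  by rewrite -invg_comm groupV; apply: (mem_L (exist _ (j, i) ji)).
by rewrite commgg group1.
Qed.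

Lemma commg_lifts_center : L \subset 'Z(H).
Proof.
rewrite gen_subG; apply/subsetP=> _ /imsetP[t _ ->].
exact: (stem_commg_center stemf cGG (lH _) (lH _)).
Qed.

Lemma der_sub_commg_lifts : H^`(1) \subset L.
Proof.
set A := <<[set l i | i : 'I_n]>>.
have sAH : A \subset H by rewrite gen_subG; apply/subsetP=> _ /imsetP[i _ ->].
have nLA : A \subset 'N(L).
  apply/cents_norm/(subset_trans sAH); rewrite centsC.
  by apply: subset_trans commg_lifts_center _; apply: subsetIr.
have derA : A^`(1) \subset L.
  apply: (der1_min nLA); rewrite quotient_gen ?(subset_trans (subset_gen _) nLA) //.
  rewrite /= abelian_gen.
  apply/centsP=> _ /morphimP[_ _ /imsetP[i _ ->] ->] _ /morphimP[_ _ /imsetP[j _ ->] ->].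
  have lN k : l k \in 'N(L) by apply/(subsetP nLA)/mem_gen/imset_f.
  by apply/commgP; rewrite -morphR ?lN //; apply/eqP/coset_id/mem_commg_lifts.
have fA : G \subset f @* A.
  rewrite -(bigdprodWY defG) gen_subG; apply/bigcupsP=> i _; rewrite cycle_subG -fl.
  by rewrite mem_morphim ?lH ?mem_gen ?imset_f.
rewrite /= derg1 gen_subG; apply/subsetP=> _ /imset2P[a b aH bH ->].
have /morphimP[a' _ a'A fa] := subsetP fA _ (stem_memG stemf aH).
have /morphimP[b' _ b'A fb] := subsetP fA _ (stem_memG stemf bH).
rewrite (stem_commg_fibre stemf aH bH (subsetP sAH _ a'A) (subsetP sAH _ b'A)) //.
by apply: (subsetP derA); rewrite mem_commg.
Qed.

Lemma card_stem_der_lifts : #|H^`(1)| <= p ^ #|T|.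
Proof.
set C := [set [~ l (val t).1, l (val t).2] | t in T].
have cCC : abelian C by apply: abelianS (center_abelian H); rewrite -gen_subG commg_lifts_center.
have expC : exponent C %| p.
  apply/exponentP=> _ /imsetP[t _ ->].
  by apply: (stem_commg_expn stemf cGG); rewrite ?fl.
apply: leq_trans (subset_leq_card der_sub_commg_lifts) _.
apply: leq_trans (card_abelian_gen cCC) _.
apply: leq_trans (leq_pexp2l (dvdn_gt0 p_gt0 expC) (leq_imset_card _ _)) _.
by case: (posnP #|T|) => [-> // | T_gt0]; rewrite leq_exp2r // dvdn_leq.
Qed.

End StemBasis.

Lemma schur_abelem_deep_epow (hT gT : finGroupType) (H : {group hT}) (G : {group gT})
    (f : {morphism H >-> gT}) p x y :
  prime p -> p.-abelem G -> schur_cover G f -> x \in G -> y \in G ->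
  deep_adj f x y -> epow_adj x y.
Proof.
move=> p_pr abelG [stemf maxf] xG yG [xy liftsC]; split=> //; apply: contraT => ncX.
have [n [e [t [et1 et2 defG oe]]]] := abelem_basis_through p_pr abelG xG yG ncX.
have cGG := abelem_abelian abelG.
pose l i := stem_lift f (e i).
have /all_and2[lH fl] i : l i \in H /\ f (l i) = e i.
  exact: (stem_liftP stemf (mem_bigdprod_cycle defG _)).
have ep i : e i ^+ p = 1 by rewrite -(oe i) expg_order.
have le := card_stem_der_lifts stemf cGG (prime_gt0 p_pr) defG ep lH fl.
set T := [set _ | _] in le.
have T_lt : #|T| < #|{: ltpair n}|.
  rewrite -cardsT; apply/proper_card/properP; split; first exact: subsetT.
  by exists t; rewrite ?inE // negbK; apply/commgP/liftsC; rewrite ?fl ?et1 ?et2.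
have ge := maxf _ _ _ (heis_proj_stem (prime_gt1 p_pr) cGG defG oe).
rewrite card_heis_proj_ker in ge.
have := leq_trans ge (leq_trans (subset_leq_card (stem_ker_der stemf)) le).
by rewrite leq_exp2l ?prime_gt1 // leqNgt T_lt.
Qed.

Theorem theorem4p1 (gT : finGroupType) (G : {group gT}) (p : nat) :
  prime p -> p.-group G -> abelian G -> ~~ cyclic G ->
  ((forall (hT : finGroupType) (H : {group hT}) (f : {morphism H >-> gT}),
      schur_cover G f ->
      forall x y, x \in G -> y \in G -> (deep_adj f x y <-> epow_adj x y))
   <-> p.-abelem G).
Proof.
move=> p_pr pG cGG ncG; split=> [deep_epow | abelG hT H f schurf x y xG yG].
  apply: contraT => not_abelem; exfalso.
  have [hT [H [f schurf]]] := schur_cover_exists cGG.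
  have [x [y [xG yG deep not_epow]]] :=
    stem_deep_not_epow p_pr pG cGG ncG not_abelem schurf.1.
  exact/not_epow/(deep_epow _ _ _ schurf x y xG yG).
split; first exact: schur_abelem_deep_epow abelG schurf xG yG.
exact: epow_deep_adj schurf.1.
Qed.
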